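(* Let $(P,A,\lambda)$ be a marked poset and $(U_1,U_2)$ an admissible decomposition of it. Then the marked chain-order polytope $\mathcal{CO}_{U_1,U_2}(\lambda)$ is a lattice polytope, and it is normal.
   Context: A marked poset is a triple $(P,A,\lambda)$ where $(P,\prec)$ is a finite poset, $A\subseteq P$ contains all minimal and all maximal elements of $P$, and $\lambda:A\to\mathbb{Z}_{\ge 0}$, $a\mapsto\lambda_a$. A decomposition of $(P,A,\lambda)$ is a pair $(U_1,U_2)$ of disjoint sets with $U_1\cup U_2=P\setminus A$; it is admissible if there are no $u_1\in U_1$, $u_2\in U_2$ with $u_1\prec u_2$. Put $A_1=A\cup U_1$. The marked chain-order polytope $\mathcal{CO}_{U_1,U_2}(\lambda)\subset\mathbb{R}^{P\setminus A}$ is the set of $(x_p)_{p\in P\setminus A}$ such that: (i) $x_p\le\lambda_a$ whenever $p\in U_1$, $a\in A$, $p\prec a$; (ii) $\lambda_b\le x_q$ whenever $q\in U_1$, $b\in A$, $b\prec q$; (iii) $x_p\le x_q$ whenever $p,q\in U_1$, $p\prec q$; (iv) $x_p\ge0$ for $p\in U_2$; (v) for every chain $b\prec p_n\prec\cdots\prec p_1\prec a$ with $n\ge1$, $a,b\in A_1$, $p_i\in U_2$: $x_{p_1}+\cdots+x_{p_n}\le\lambda_a-\lambda_b$, where $\lambda_q$ means $x_q$ for $q\in U_1$; (vi) for every chain $p_1\prec\cdots\prec p_s\prec q$ with $q\in U_1$, $p_i\in U_2$: $x_{p_1}+\cdots+x_{p_s}\le x_q$. A lattice polytope $Q\subset\mathbb{R}^d$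 is normal if for every $n\in\mathbb{N}$ the set $nQ\cap\mathbb{Z}^d$ is the $n$-fold Minkowski sum of $Q\cap\mathbb{Z}^d$. *)

From HB Require Import structures.
From mathcomp Require Import all_boot all_order all_algebra.
Set Implicit Arguments. Unset Strict Implicit. Unset Printing Implicit Defensive.
Import Order.TTheory GRing.Theory Num.Theory.
Local Open Scope ring_scope.

Definition lattice_point (I : finType) (R : numDomainType) (x : {ffun I -> R}) : Prop :=
  forall i, exists z : int, x i = z%:~R.

Definition conv_hull (I : finType) (R : numDomainType)
    (S : seq {ffun I -> R}) (y : {ffun I -> R}) : Prop :=
  exists c : 'I_(size S) -> R,
    [/\ forall k, 0 <= c k, \sum_k c k = 1 & y = \sum_k [ffun i => c k * S`_k i]].

Definition lattice_polytope (I : finType) (R : numDomainType)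
    (Q : {ffun I -> R} -> Prop) : Prop :=
  exists S : seq {ffun I -> R},
    (forall v, v \in S -> lattice_point v) /\ (forall y, Q y <-> conv_hull S y).

Definition normal_polytope (I : finType) (R : numDomainType)
    (Q : {ffun I -> R} -> Prop) : Prop :=
  forall n : nat, (0 < n)%N -> forall y : {ffun I -> R},
    (lattice_point y /\ exists x, Q x /\ y = [ffun i => n%:R * x i]) <->
    (exists xs : 'I_n -> {ffun I -> R},
        (forall k, lattice_point (xs k) /\ Q (xs k)) /\ y = \sum_k xs k).

Definition marked_set (d : Order.disp_t) (P : finPOrderType d) (A : {set P}) : Prop :=
  forall p : P, ((forall q, ~~ (q < p)%O) \/ (forall q, ~~ (p < q)%O)) -> p \in A.

Definition decomposition (d : Order.disp_t) (P : finPOrderType d) (A U1 U2 : {set P}) : Prop :=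
  [disjoint U1 & U2] /\ U1 :|: U2 = ~: A.

Definition admissible (d : Order.disp_t) (P : finPOrderType d) (U1 U2 : {set P}) : Prop :=
  forall u1 u2, u1 \in U1 -> u2 \in U2 -> ~~ (u1 < u2)%O.

Definition coordT (d : Order.disp_t) (P : finPOrderType d) (A : {set P}) : finType :=
  {p : P | p \notin A}.

(* coordinate x_p of x in R^{P\A}, extended by 0 on A (only used for p \notin A) *)
Definition xc (d : Order.disp_t) (P : finPOrderType d) (A : {set P}) (R : numDomainType)
    (x : {ffun coordT A -> R}) (p : P) : R :=
  match @insub P (fun q => q \notin A) (coordT A) p with
  | Some i => x i
  | None => 0
  end.

(* lambda_q, with lambda_q := x_q for q in U1 (i.e. q not in A) *)
Definition lamx (d : Order.disp_t) (P : finPOrderType d) (A : {set P}) (R : numDomainType)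
    (lambda : P -> nat) (x : {ffun coordT A -> R}) (q : P) : R :=
  if q \in A then (lambda q)%:R else xc x q.

Definition chain_order_polytope (d : Order.disp_t) (P : finPOrderType d)
    (A U1 U2 : {set P}) (lambda : P -> nat) (R : numDomainType)
    (x : {ffun coordT A -> R}) : Prop :=
  let lt := fun u v : P => (u < v)%O in
  (
      forall p a, p \in U1 -> a \in A -> lt p a -> xc x p <= (lambda a)%:R) /\
      (
      forall q b, q \in U1 -> b \in A -> lt b q -> (lambda b)%:R <= xc x q) /\
      (
      forall p q, p \in U1 -> q \in U1 -> lt p q -> xc x p <= xc x q) /\
      (
      forall p, p \in U2 -> 0 <= xc x p) /\
      (      (* (v) chains b < p_n < ... < p_1 < a, n >= 1, a,b in A ∪ U1, p_i in U2;
         s = [:: p_n; ...; p_1] *)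
      forall (a b : P) (s : seq P),
        a \in A :|: U1 -> b \in A :|: U1 -> s != [::] ->
        all (fun p => p \in U2) s -> path lt b s -> lt (last b s) a ->
        \sum_(p <- s) xc x p <= lamx lambda x a - lamx lambda x b) /\
      (      (* (vi) chains p_1 < ... < p_s < q, s >= 1, q in U1, p_i in U2;
         written p :: s' = [:: p_1; ...; p_s] *)
      forall (q p : P) (s' : seq P),
        q \in U1 -> all (fun r => r \in U2) (p :: s') ->
        path lt p s' -> lt (last p s') q ->
        \sum_(r <- p :: s') xc x r <= xc x q).

From HB Require Import structures.
From mathcomp Require Import all_boot all_order all_algebra.
From mathcomp Require Import ring lra zify.
From Stdlib Require Import Classical.
Set Implicit Arguments. Unset Strict Implicit. Unset Printing Implicit Defensive.
Import Order.TTheory GRing.Theory Num.Theory.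
Local Open Scope ring_scope.

(* A point [w] of the marked order polytope, extended to all of [P], is sent to
   [x_p = w_p] on [U1] and [x_p = w_p - max {w_q | q < p, q in A :|: U2}] on
   [U2]; by admissibility every chain inequality of [CO] telescopes, and the
   map is onto, its inverse taking the maximum of [lambda_b + x_(s_1) + ... +
   x_(s_k)] over chains [b < s_1 < ... < s_k = p] of [U2] above a mark [b].
   Once the maximisers are fixed the map is linear. If [w] has a value in a
   gap [(k, k+1)], pushing all such values down to [k] or up to [k+1] keeps the
   maximisers and writes [w] as a convex combination of two points with fewer
   non-integral values, so [CO] is the hull of its lattice points. If [n x] is
   integral then so is [n w], and the floors of [(n w + j) / n], [j < n], keep
   the maximisers and sum to [n w] (Hermite's identity), giving normality. *)

Section FinPOrderExtrema.
Variables (d : Order.disp_t) (P : finPOrderType d).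
Implicit Types (p q r : P) (S : {set P}).

Lemma card_strict_below_lt p q : (p < q)%O ->
  (#|[set r | (r < p)%O]| < #|[set r | (r < q)%O]|)%N.
Proof.
move=> pq; apply/proper_card/properP; split.
  by apply/subsetP => r; rewrite !inE => /lt_trans; apply.
by exists p; rewrite !inE ?ltxx.
Qed.

Lemma exists_minimal_below p q : (q < p)%O ->
  exists2 b, (b < p)%O & forall r, ~~ (r < b)%O.
Proof.
move=> qp; case: (@arg_minP _ _ _ q [pred r | (r < p)%O]
  (fun r => #|[set t | (t < r)%O]|)) => // b bp bmin.
exists b => // r; apply/negP => rb.
by have := bmin r (lt_trans rb bp); rewrite leEnat leqNgt card_strict_below_lt.
Qed.

Lemma exists_maximal_above p q : (p < q)%O ->
  exists2 a, (p < a)%O & forall r, ~~ (a < r)%O.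
Proof.
move=> pq; case: (@arg_maxP _ _ _ q [pred r | (p < r)%O]
  (fun r => #|[set t | (t < r)%O]|)) => // a pa amax.
exists a => // r; apply/negP => ar.
by have /= := amax r (lt_trans pa ar); rewrite leEnat leqNgt card_strict_below_lt.
Qed.

Lemma chain_has_max S p : p \in S -> {in S &, total <=%O} ->
  exists2 q, q \in S & {in S, forall r, (r <= q)%O}.
Proof.
move=> pS Stot; case: (@arg_maxP _ _ _ p (mem S)
  (fun r => #|[set t | (t < r)%O]|)) => // q qS qmax.
exists q => // r rS; case/orP: (Stot r q rS qS) => // qr.
case: (eqVneq q r) => [-> //|qNr].
have /= := qmax r rS; rewrite leEnat leqNgt card_strict_below_lt //.
by rewrite lt_neqAle qNr.
Qed.

End FinPOrderExtrema.

Lemma sum_divn_add (n m : nat) : (0 < n)%N -> (\sum_(k < n) ((m + k) %/ n))%N = m.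
Proof.
case: n => [//|n] _; elim: m => [|m IH].
  by rewrite big1 // => k _; rewrite add0n divn_small.
rewrite big_ord_recr /= -[in RHS]IH big_ord_recl /= addn0.
have -> : (m.+1 + n = m + n.+1)%N by rewrite addSnnS.
have -> : (\sum_(k < n) (m.+1 + k) %/ n.+1 = \sum_(k < n) (m + bump 0 k) %/ n.+1)%N.
  by apply: eq_bigr => k _; rewrite /bump /= add1n addSnnS.
rewrite divnDr ?dvdnn // divnn /=; lia.
Qed.

Lemma exists_filter_prop (T : eqType) (Q : T -> Prop) (s : seq T) :
  exists s' : seq T, forall z, z \in s' <-> z \in s /\ Q z.
Proof.
elim: s => [|x s [s' Hs']]; first by exists (Nil T) => z; rewrite in_nil; split=> // [[]].
case: (classic (Q x)) => Qx; [exists (x :: s')|exists s'] => z; split.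
- rewrite inE => /orP [/eqP ->|/Hs' [zs Qz]]; first by rewrite mem_head.
  by rewrite inE zs orbT.
- case; rewrite inE => /orP [/eqP -> _|zs Qz]; first by rewrite mem_head.
  by rewrite inE (proj2 (Hs' z) (conj zs Qz)) orbT.
- by case/Hs' => zs Qz; rewrite inE zs orbT.
- by case; rewrite inE => /orP [/eqP -> //|zs Qz]; apply/Hs'.
Qed.

Lemma lattice_point_sum (I : finType) (R : numDomainType) (J : finType)
    (xs : J -> {ffun I -> R}) :
  (forall j, lattice_point (xs j)) -> lattice_point (\sum_j xs j).
Proof.
move=> Hxs i; rewrite sum_ffunE.
apply: (big_rec (fun v => exists z : int, v = z%:~R)); first by exists 0.
by move=> j _ _ [z ->]; case: (Hxs j i) => z' ->; exists (z' + z); rewrite intrD.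
Qed.

Lemma intr_ge0_nat (R : numDomainType) (z : int) :
  0 <= (z%:~R : R) -> exists m : nat, (z%:~R : R) = m%:R.
Proof. by rewrite ler0z => /gez0_abs <-; exists `|z|%N. Qed.

Inductive conv_closure (I : finType) (R : numDomainType)
    (T : {ffun I -> R} -> Prop) : {ffun I -> R} -> Prop :=
| conv_closure_base z : T z -> conv_closure T z
| conv_closure_comb y z t : 0 <= t -> t <= 1 ->
    conv_closure T y -> conv_closure T z ->
    conv_closure T [ffun i => t * y i + (1 - t) * z i].

Lemma conv_closure_hull (I : finType) (R : numDomainType)
    (T : {ffun I -> R} -> Prop) (S : seq {ffun I -> R}) y :
  (forall z, T z -> z \in S) -> conv_closure T y -> conv_hull S y.
Proof.
move=> TS; elim=> {y} [z Tz|y z t t0 t1 _ [c1 [c10 c11 ->]] _ [c2 [c20 c21 ->]]].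
  have zS : (index z S < size S)%N by rewrite index_mem TS.
  exists (fun k : 'I_(size S) => (k == Ordinal zS)%:R); split.
  - by move=> k; rewrite ler0n.
  - by rewrite (bigD1 (Ordinal zS)) //= eqxx big1 ?addr0 // => k /negbTE ->.
  - apply/ffunP => i; rewrite sum_ffunE (bigD1 (Ordinal zS)) //= ffunE eqxx mul1r.
    by rewrite nth_index ?TS // big1 ?addr0 // => k /negbTE kz; rewrite ffunE kz mul0r.
exists (fun k => t * c1 k + (1 - t) * c2 k); split.
- by move=> k; rewrite addr_ge0 ?mulr_ge0 ?subr_ge0.
- by rewrite big_split /= -!mulr_sumr c11 c21; ring.
- apply/ffunP => i; rewrite !ffunE !sum_ffunE !mulr_sumr -big_split.
  by apply: eq_bigr => k _; rewrite !ffunE /=; ring.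
Qed.

Section NatGaps.
Variable R : realFieldType.
Implicit Types (k m : nat) (s v : R).

Definition in_gap k v := (k%:R < v) && (v < k.+1%:R).

Definition shift_gap k s v := if in_gap k v then v + s else v.

Lemma in_gap_nat k m : ~~ in_gap k m%:R.
Proof. by rewrite /in_gap !ltr_nat; apply/negP => /andP [H1 H2]; lia. Qed.

Lemma shift_gap_nat k s m : shift_gap k s m%:R = m%:R.
Proof. by rewrite /shift_gap (negbTE (in_gap_nat k m)). Qed.

Definition is_nat_le K v := [exists m : 'I_K.+1, v == (m : nat)%:R].

Lemma is_nat_leP K v : is_nat_le K v -> exists m : nat, v = m%:R.
Proof. by case/existsP => m /eqP ->; exists m. Qed.

Lemma is_nat_le_nat K m : (m <= K)%N -> is_nat_le K m%:R.
Proof. by move=> mK; apply/existsP; exists (Ordinal (n := K.+1) mK). Qed.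

Lemma exists_in_gap K v : 0 <= v -> v <= K%:R ->
  (forall m, (m <= K)%N -> v != m%:R) -> exists2 k, (k < K)%N & in_gap k v.
Proof.
elim: K => [|K IH] v0 vK vNnat; first by move: (vNnat 0%N isT); rewrite eq_le vK v0.
case: (lerP v K%:R) => [vleK|Kltv].
  case: IH => // [m mK|k kK kv]; last by exists k => //; rewrite ltnW.
  by apply: vNnat; rewrite (leq_trans mK).
by exists K; rewrite // /in_gap Kltv lt_neqAle vK vNnat.
Qed.

Lemma shift_gap_le k s v v' :
  (in_gap k v -> k%:R <= v + s <= k.+1%:R) ->
  (in_gap k v' -> k%:R <= v' + s <= k.+1%:R) ->
  v <= v' -> shift_gap k s v <= shift_gap k s v'.
Proof.
rewrite /shift_gap /in_gap => sv sv' vv'.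
case: ifPn => Hv; case: ifPn => Hv'; rewrite ?lerD2r //.
- have /andP [_ H] := sv Hv; move: Hv Hv' => /andP [? ?].
  by rewrite negb_and -!leNgt => /orP [] ?; lra.
- have /andP [H _] := sv' Hv'; move: Hv' Hv => /andP [? ?].
  by rewrite negb_and -!leNgt => /orP [] ?; lra.
Qed.

Lemma shift_gap_comb k s1 s2 v : s1 != s2 ->
  s2 / (s2 - s1) * shift_gap k s1 v + (1 - s2 / (s2 - s1)) * shift_gap k s2 v = v.
Proof.
move=> s12; have s21 : s2 - s1 != 0 by rewrite subr_eq0 eq_sym.
by rewrite /shift_gap; case: ifP => _; field.
Qed.

End NatGaps.

Section MarkedChainOrderPolytope.
Variables (R : realFieldType) (d : Order.disp_t) (P : finPOrderType d)
  (A U1 U2 : {set P}) (lambda : P -> nat).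
Hypotheses (HA : marked_set A) (Hdec : decomposition A U1 U2)
  (Hadm : admissible U1 U2).

Local Notation I := (coordT A).
Local Notation CO := (@chain_order_polytope d P A U1 U2 lambda R).
Implicit Types (p q r a b : P) (S : {set P}) (x : {ffun I -> R}).

Lemma U1_notA p : p \in U1 -> p \notin A.
Proof.
case: Hdec => _ U12 pU1; have : p \in U1 :|: U2 by rewrite inE pU1.
by rewrite U12 inE.
Qed.

Lemma U2_notA p : p \in U2 -> p \notin A.
Proof.
case: Hdec => _ U12 pU2; have : p \in U1 :|: U2 by rewrite inE pU2 orbT.
by rewrite U12 inE.
Qed.

Lemma U1_notU2 p : p \in U1 -> p \notin U2.
Proof.
case: Hdec => /disjoint_setI0 U12 _ pU1; apply/negP => pU2.
have : p \in U1 :&: U2 by rewrite inE pU1 pU2.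
by rewrite U12 inE.
Qed.

Lemma notA_U12 p : p \notin A -> (p \in U1) || (p \in U2).
Proof.
case: Hdec => _ U12 pA; have : p \in ~: A by rewrite inE.
by rewrite -U12 inE.
Qed.

Lemma xc_val x (i : I) : xc x (val i) = x i.
Proof. by rewrite /xc valK. Qed.

Lemma xc_Sub x p (pA : p \notin A) : xc x p = x (Sub p pA : I).
Proof. by rewrite -[in LHS](@SubK _ _ I p pA) xc_val. Qed.

Lemma exists_mark_below p : p \notin A -> exists2 b, b \in A & (b < p)%O.
Proof.
move=> pA; case: (boolP [exists q, (q < p)%O]) => [/existsP [q qp]|/existsPn pmin].
  by case: (exists_minimal_below qp) => b bp bmin; exists b => //; apply: HA; left.
by move: pA; rewrite HA //; left.
Qed.

Lemma exists_mark_above p : p \notin A -> exists2 a, a \in A & (p < a)%O.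
Proof.
move=> pA; case: (boolP [exists q, (p < q)%O]) => [/existsP [q pq]|/existsPn pmax].
  by case: (exists_maximal_above pq) => a pa amax; exists a => //; apply: HA; right.
by move: pA; rewrite HA //; right.
Qed.

Section PolytopePoint.
Variables (x : {ffun I -> R}) (Hx : CO x).

Lemma CO_U1_le_mark p a : p \in U1 -> a \in A -> (p < a)%O -> xc x p <= (lambda a)%:R.
Proof. by case: Hx => H _; apply: H. Qed.

Lemma CO_mark_le_U1 q b : q \in U1 -> b \in A -> (b < q)%O -> (lambda b)%:R <= xc x q.
Proof. by case: Hx => _ [H _]; apply: H. Qed.

Lemma CO_U1_mono p q : p \in U1 -> q \in U1 -> (p < q)%O -> xc x p <= xc x q.
Proof. by case: Hx => _ [_ [H _]]; apply: H. Qed.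

Lemma CO_U2_ge0 p : p \in U2 -> 0 <= xc x p.
Proof. by case: Hx => _ [_ [_ [H _]]]; apply: H. Qed.

Lemma CO_chain a b (s : seq P) :
  a \in A :|: U1 -> b \in A :|: U1 -> s != [::] ->
  all (mem U2) s -> path <%O b s -> (last b s < a)%O ->
  \sum_(p <- s) xc x p <= lamx lambda x a - lamx lambda x b.
Proof. by case: Hx => _ [_ [_ [_ [H _]]]]; apply: H. Qed.

Lemma CO_chain_U1 q p (s : seq P) :
  q \in U1 -> all (mem U2) (p :: s) -> path <%O p s -> (last p s < q)%O ->
  \sum_(r <- p :: s) xc x r <= xc x q.
Proof. by case: Hx => _ [_ [_ [_ [_ H]]]]; apply: H. Qed.

Lemma CO_ge0 p : p \notin A -> 0 <= xc x p.
Proof.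
move=> pA; case/orP: (notA_U12 pA) => [pU1|]; last exact: CO_U2_ge0.
case: (exists_mark_below pA) => b bA bp.
exact: le_trans (ler0n _ _) (CO_mark_le_U1 pU1 bA bp).
Qed.

End PolytopePoint.

(* Recording the maximisers [c] makes [transfer c] linear in [w]. *)
Definition order_lift (c : P -> P) (w : P -> R) :=
  [/\ forall a, a \in A -> w a = (lambda a)%:R,
      forall p, 0 <= w p,
      forall p q, (p < q)%O -> (p \notin A) || (q \notin A) -> w p <= w q &
      forall p, p \in U2 -> [/\ (c p < p)%O, c p \in A :|: U2 &
          forall q, (q < p)%O -> q \in A :|: U2 -> w q <= w (c p)]].

Definition transfer (c : P -> P) (w : P -> R) : {ffun I -> R} :=
  [ffun i => if val i \in U2 then w (val i) - w (c (val i)) else w (val i)].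

Section Transfer.
Variables (c : P -> P) (w : P -> R).
Hypothesis Hw : order_lift c w.

Lemma xc_transfer p : p \notin A ->
  xc (transfer c w) p = if p \in U2 then w p - w (c p) else w p.
Proof. by move=> pA; rewrite (xc_Sub _ pA) ffunE. Qed.

Lemma xc_transfer_U1 p : p \in U1 -> xc (transfer c w) p = w p.
Proof. by move=> pU1; rewrite xc_transfer ?U1_notA // (negbTE (U1_notU2 pU1)). Qed.

Lemma lamx_transfer q : q \in A :|: U1 -> lamx lambda (transfer c w) q = w q.
Proof.
case: Hw => wA _ _ _; rewrite /lamx inE.
by case: ifP => [/wA //|_ /= /xc_transfer_U1].
Qed.

Lemma transfer_path_sum_le b s : b \in A :|: U2 -> all (mem U2) s -> path <%O b s ->
  \sum_(p <- s) xc (transfer c w) p <= w (last b s) - w b.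
Proof.
case: Hw => _ _ _ wc; elim: s b => [|p s IH] b bAU2 /=; first by rewrite big_nil subrr.
move=> /andP [pU2 sU2] /andP [bp ps].
rewrite big_cons xc_transfer ?U2_notA // pU2.
have pAU2 : p \in A :|: U2 by rewrite inE pU2 orbT.
have := IH p pAU2 sU2 ps; case: (wc p pU2) => _ _ /(_ b bp bAU2); lra.
Qed.

Lemma transfer_CO : CO (transfer c w).
Proof.
case: (Hw) => wA w0 wmono wc.
have last_U2 p s : all (mem U2) (p :: s) -> last p s \in U2.
  by move/allP; apply; rewrite mem_last.
split; [|split; [|split; [|split; [|split]]]].
- move=> p a pU1 aA pa; rewrite xc_transfer_U1 // -wA //.
  by apply: wmono; rewrite // (U1_notA pU1).
- move=> q b qU1 bA bq; rewrite xc_transfer_U1 // -wA //.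
  by apply: wmono; rewrite // (U1_notA qU1) orbT.
- move=> p q pU1 qU1 pq; rewrite !xc_transfer_U1 //.
  by apply: wmono; rewrite // (U1_notA pU1).
- move=> p pU2; rewrite xc_transfer ?U2_notA // pU2 subr_ge0.
  by case: (wc p pU2) => cp _ _; apply: wmono; rewrite // (U2_notA pU2) orbT.
- move=> a b [//|p s] aAU1 bAU1 _ psU2 bps lasta.
  have bA : b \in A.
    case/setUP: bAU1 => // bU1; case/andP: bps => bp _; case/andP: psU2 => pU2 _.
    by move: (Hadm bU1 pU2); rewrite bp.
  have bAU2 : b \in A :|: U2 by rewrite inE bA.
  have lastU2 : last b (p :: s) \in U2 := last_U2 p s psU2.
  have := transfer_path_sum_le bAU2 psU2 bps.
  have : w (last b (p :: s)) <= w a by apply: wmono; rewrite // (U2_notA lastU2).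
  by rewrite !lamx_transfer // ?inE ?bA //; lra.
- move=> q p s qU1 psU2 ps lastq; case/andP: (psU2) => pU2 sU2.
  rewrite big_cons xc_transfer ?U2_notA // pU2 xc_transfer_U1 //.
  have pAU2 : p \in A :|: U2 by rewrite inE pU2 orbT.
  have := transfer_path_sum_le pAU2 sU2 ps.
  have : w (last p s) <= w q by apply: wmono; rewrite // U2_notA ?last_U2.
  have := w0 (c p); lra.
Qed.

End Transfer.

Section Lift.
Variables (x : {ffun I -> R}) (Hx : CO x).

(* [mark_chain p (b, S)]: [S] is a chain in [U2] with maximum [p] and [b] is a
   mark below all of [S]. The inverse of the transfer map sends [p] in [U2] to
   the largest value of [lambda b + sum_(s in S) x_s] over such chains. *)
Definition mark_chain p (bS : P * {set P}) : bool :=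
  [&& bS.1 \in A, bS.2 \subset U2, p \in bS.2,
      [forall s in bS.2, (bS.1 < s)%O && (s <= p)%O] &
      [forall s in bS.2, forall t in bS.2, (s <= t)%O || (t <= s)%O]].

Definition chain_value (bS : P * {set P}) : R :=
  (lambda bS.1)%:R + \sum_(s in bS.2) xc x s.

Definition lift p : R :=
  if p \in A then (lambda p)%:R else if p \in U1 then xc x p
  else \big[Order.max/0]_(bS | mark_chain p bS) chain_value bS.

Lemma mark_chainP p b S : reflect
  [/\ b \in A, S \subset U2, p \in S, {in S, forall s, (b < s)%O && (s <= p)%O}
    & {in S &, total <=%O}]
  (mark_chain p (b, S)).
Proof.
apply: (iffP and5P) => /= -[bA SU2 pS bSp Stot]; split=> //.
- exact/forall_inP.
- by move=> s t sS tS; move/forall_inP: Stot => /(_ s sS) /forall_inP; apply.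
- exact/forall_inP.
- by apply/forall_inP => s sS; apply/forall_inP => t tS; apply: Stot.
Qed.

Lemma chain_value_ge0 p bS : mark_chain p bS -> 0 <= chain_value bS.
Proof.
case: bS => b S /mark_chainP [_ /subsetP SU2 _ _ _].
by rewrite addr_ge0 // sumr_ge0 // => s /SU2; apply: CO_U2_ge0.
Qed.

Lemma mark_chain_single p b : b \in A -> (b < p)%O -> p \in U2 ->
  mark_chain p (b, [set p]) /\ chain_value (b, [set p]) = (lambda b)%:R + xc x p.
Proof.
move=> bA bp pU2; split; last by rewrite /chain_value /= big_set1.
apply/mark_chainP; split; rewrite ?sub1set ?inE //.
- by move=> s; rewrite inE => /eqP ->; rewrite bp lexx.
- by move=> s t; rewrite !inE => /eqP -> /eqP ->; rewrite lexx.
Qed.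

Lemma mark_chain_extend p q b S : mark_chain p (b, S) -> (p < q)%O -> q \in U2 ->
  mark_chain q (b, q |: S) /\ chain_value (b, q |: S) = chain_value (b, S) + xc x q.
Proof.
move=> /mark_chainP [bA SU2 pS bSp Stot] pq qU2.
have Sq s : s \in S -> (s <= q)%O by move/bSp/andP => [_ /le_trans]; apply; rewrite ltW.
have qS : q \notin S by apply/negP => /bSp/andP [_]; rewrite lt_geF.
split.
  apply/mark_chainP; split; rewrite ?subUset ?sub1set ?setU11 ?SU2 ?qU2 //.
  - move=> s /setU1P [->|sS]; first by rewrite (lt_trans _ pq) ?lexx //;
      case/andP: (bSp p pS).
    by case/andP: (bSp s sS) => -> _; rewrite Sq.
  - move=> s t /setU1P [->|sS] /setU1P [->|tS];
      rewrite ?lexx ?Sq ?orbT //; exact: Stot.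
by rewrite /chain_value /= big_setU1 //=; ring.
Qed.

Lemma lift_U2 p : p \in U2 ->
  lift p = \big[Order.max/0]_(bS | mark_chain p bS) chain_value bS.
Proof.
move=> pU2; rewrite /lift (negbTE (U2_notA pU2)).
by rewrite (negbTE (contraL (@U1_notU2 p) pU2)).
Qed.

Lemma lift_U2_attained p : p \in U2 ->
  exists2 bS, mark_chain p bS & lift p = chain_value bS.
Proof.
move=> pU2; case: (exists_mark_below (U2_notA pU2)) => b bA bp.
have [single _] := mark_chain_single bA bp pU2.
rewrite lift_U2 //.
have [bS ? ->] := @eq_bigmax _ _ _ 0 _ _ chain_value single (@chain_value_ge0 p).
by exists bS.
Qed.

Lemma chain_value_le_lift p bS : p \in U2 -> mark_chain p bS -> chain_value bS <= lift p.
Proof. by move=> pU2 pbS; rewrite lift_U2 // le_bigmax_cond. Qed.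

Lemma lift_lamx a : a \in A :|: U1 -> lift a = lamx lambda x a.
Proof. by rewrite /lift /lamx inE; case: ifP => //= _ ->. Qed.

Lemma chain_value_le_lamx p b S a : mark_chain p (b, S) -> a \in A :|: U1 ->
  (p < a)%O -> chain_value (b, S) <= lamx lambda x a.
Proof.
move=> /mark_chainP [bA /subsetP SU2 pS bSp Stot] aAU1 pa.
pose s := sort <=%O (enum S).
have mem_s r : (r \in s) = (r \in S) by rewrite mem_sort mem_enum.
have sum_s : \sum_(r <- s) xc x r = \sum_(r in S) xc x r.
  by rewrite (perm_big (enum S)) ?perm_sort // big_enum.
have s_lt : sorted <%O s.
  rewrite lt_sorted_uniq_le sort_uniq enum_uniq (sort_sorted_in Stot) //.
  by apply/allP => r; rewrite mem_enum.
have bAU1 : b \in A :|: U1 by rewrite inE bA.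
have sU2 : all (mem U2) s by apply/allP => r; rewrite mem_s => /SU2.
have s_path : path <%O b s.
  case E : s s_lt => [//|h t] /= ->; rewrite andbT.
  have hS : h \in S by rewrite -mem_s E mem_head.
  by case/andP: (bSp h hS).
have s_last : (last b s < a)%O.
  case E : s => [|h t]; first by move: (mem_s p); rewrite E pS.
  have lastS : last h t \in S by rewrite -mem_s E /= mem_last.
  by case/andP: (bSp _ lastS) => _ /le_lt_trans; apply.
have sN0 : s != [::] by apply/eqP => s0; move: (mem_s p); rewrite s0 pS.
have := CO_chain Hx aAU1 bAU1 sN0 sU2 s_path s_last.
by rewrite sum_s /chain_value /= {2}/lamx bA; lra.
Qed.

Definition lift_pred p : P :=
  odflt p [pick q | [&& (q < p)%O, q \in A :|: U2 &
    [forall r, ((r < p)%O && (r \in A :|: U2)) ==> (lift r <= lift q)]]].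

Lemma lift_pred_spec p : p \in U2 ->
  [/\ (lift_pred p < p)%O, lift_pred p \in A :|: U2 &
      forall q, (q < p)%O -> q \in A :|: U2 -> lift q <= lift (lift_pred p)].
Proof.
move=> pU2; rewrite /lift_pred; case: pickP => [q /and3P [qp qAU2 /forallP qmax]|nomax].
  by split=> // r rp rAU2; move: (qmax r); rewrite rp rAU2.
exfalso; case: (exists_mark_below (U2_notA pU2)) => b bA bp.
pose below := [pred q | (q < p)%O && (q \in A :|: U2)].
have bbelow : b \in below by rewrite inE /= bp inE bA.
case: (arg_maxP lift bbelow) => q /andP [qp qAU2] qmax.
move: (nomax q); rewrite qp qAU2 => /negP; apply.
by apply/forallP => r; apply/implyP => rbelow; apply: qmax.
Qed.

Lemma lift_ge0 p : 0 <= lift p.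
Proof.
rewrite /lift; case: ifPn => pA; first exact: ler0n.
case: ifP => pU1; last exact: bigmax_ge_id.
case: (exists_mark_below pA) => b bA bp.
exact: le_trans (ler0n _ _) (CO_mark_le_U1 Hx pU1 bA bp).
Qed.

Lemma lift_mono p q : (p < q)%O -> (p \notin A) || (q \notin A) -> lift p <= lift q.
Proof.
move=> pq pqA.
have liftA a : a \in A -> lift a = (lambda a)%:R by rewrite /lift => ->.
have liftU1 a : a \in U1 -> lift a = xc x a.
  by move=> aU1; rewrite /lift (negbTE (U1_notA aU1)) aU1.
case: (boolP (p \in A)) => pA.
  have qA : q \notin A by move: pqA; rewrite pA.
  case/orP: (notA_U12 qA) => qU; first by rewrite liftA // liftU1 // (CO_mark_le_U1 Hx).
  have [single single_val] := mark_chain_single pA pq qU.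
  rewrite liftA //; apply: le_trans (chain_value_le_lift qU single).
  by rewrite single_val lerDl (CO_U2_ge0 Hx).
case/orP: (notA_U12 pA) => pU.
  case: (boolP (q \in A)) => qA; first by rewrite liftU1 // liftA // (CO_U1_le_mark Hx).
  case/orP: (notA_U12 qA) => qU; first by rewrite !liftU1 // (CO_U1_mono Hx).
  by move: (Hadm pU qU); rewrite pq.
case: (boolP (q \in U2)) => qU2.
  rewrite [lift p]lift_U2 //; apply/bigmax_leP; split; first exact: lift_ge0.
  move=> [b S] pbS; have [qbS qbS_val] := mark_chain_extend pbS pq qU2.
  apply: le_trans (chain_value_le_lift qU2 qbS).
  by rewrite qbS_val lerDl (CO_U2_ge0 Hx).
have qAU1 : q \in A :|: U1.
  rewrite inE; case: (boolP (q \in A)) => //= qA.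
  by case/orP: (notA_U12 qA); rewrite // (negbTE qU2).
case: (lift_U2_attained pU) => -[b S] pbS ->.
by rewrite lift_lamx //; apply: chain_value_le_lamx pbS qAU1 pq.
Qed.

Lemma chain_value_le_pred p b S : p \in U2 -> mark_chain p (b, S) ->
  chain_value (b, S) <= lift (lift_pred p) + xc x p.
Proof.
move=> pU2 pbS; case/mark_chainP: (pbS) => bA SU2 pS bSp Stot.
case: (lift_pred_spec pU2) => _ _ pred_max.
have -> : chain_value (b, S) = chain_value (b, S :\ p) + xc x p.
  by rewrite /chain_value /= (big_setD1 p) //=; ring.
rewrite lerD2r; case: (set_0Vmem (S :\ p)) => [->|[r rS]].
  rewrite /chain_value /= big_set0 addr0.
  have := pred_max b; rewrite /lift bA inE bA; apply => //.
  by case/andP: (bSp p pS).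
have Sp_tot : {in S :\ p &, total <=%O}.
  by move=> s t /setD1P [_ sS] /setD1P [_ tS]; apply: Stot.
have [q /setD1P [qNp qS] qmax] := chain_has_max rS Sp_tot.
have qU2 : q \in U2 by apply: (subsetP SU2).
have qp : (q < p)%O by case/andP: (bSp q qS) => _; rewrite lt_neqAle qNp.
apply: le_trans (pred_max q qp _); last by rewrite inE qU2 orbT.
apply: chain_value_le_lift => //; apply/mark_chainP; split=> //.
- exact: subset_trans (subsetDl _ _) SU2.
- by rewrite !inE qNp.
- by move=> s sSp; case/setD1P: (sSp) => _ /bSp /andP [-> _]; rewrite qmax.
Qed.

Lemma lift_U2_rec p : p \in U2 -> lift p = lift (lift_pred p) + xc x p.
Proof.
move=> pU2; case: (lift_pred_spec pU2) => predp predAU2 _.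
apply/eqP; rewrite eq_le; apply/andP; split.
  case: (lift_U2_attained pU2) => -[b S] pbS ->.
  exact: chain_value_le_pred.
case/setUP: predAU2 => [predA|predU2].
  have [single single_val] := mark_chain_single predA predp pU2.
  by rewrite {1}/lift predA -single_val chain_value_le_lift.
case: (lift_U2_attained predU2) => -[b S] pbS ->.
have [pbS' <-] := mark_chain_extend pbS predp pU2.
exact: chain_value_le_lift.
Qed.

Lemma lift_order_lift : order_lift lift_pred lift.
Proof.
split; [by move=> a aA; rewrite /lift aA|exact: lift_ge0|exact: lift_mono|].
exact: lift_pred_spec.
Qed.

Lemma transferK : transfer lift_pred lift = x.
Proof.
apply/ffunP => i; rewrite ffunE -xc_val.
case: ifP => [iU2|iNU2]; first by rewrite lift_U2_rec //; ring.
have iA : val i \notin A := valP i.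
case/orP: (notA_U12 iA) => [iU1|]; last by rewrite iNU2.
by rewrite /lift (negbTE iA) iU1.
Qed.

Lemma lift_affine p : exists (k : nat) (S : {set P}),
  S \subset ~: A /\ lift p = k%:R + \sum_(s in S) xc x s.
Proof.
case: (boolP (p \in A)) => pA.
  by exists (lambda p), set0; rewrite sub0set big_set0 addr0 /lift pA.
case: (boolP (p \in U1)) => pU1.
  exists 0%N, [set p]; rewrite sub1set inE pA big_set1 add0r /lift.
  by rewrite (negbTE pA) pU1.
have pU2 : p \in U2 by case/orP: (notA_U12 pA); rewrite // (negbTE pU1).
case: (lift_U2_attained pU2) => -[b S] /mark_chainP [_ SU2 _ _ _] ->.
exists (lambda b), S; split=> //; apply: subset_trans SU2 _.
by apply/subsetP => r /U2_notA; rewrite inE.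
Qed.

End Lift.

Definition mark_max : nat := \max_(a in A) lambda a.

Lemma order_lift_le_max c w p : order_lift c w -> w p <= mark_max%:R.
Proof.
case=> wA _ wmono _; have lam_le a : a \in A -> w a <= mark_max%:R.
  by move=> aA; rewrite wA // ler_nat (leq_bigmax_cond _ aA).
case: (boolP (p \in A)) => pA; first exact: lam_le.
case: (exists_mark_above pA) => a aA pa.
by apply: le_trans (lam_le a aA); apply: wmono; rewrite ?pA.
Qed.

Lemma transfer_lattice c w : (forall p, exists m : nat, w p = m%:R) ->
  lattice_point (transfer c w).
Proof.
move=> wnat i; rewrite ffunE; case: (wnat (val i)) => m ->; case: ifP => _.
  by case: (wnat (c (val i))) => m' ->; exists (m%:Z - m'%:Z); rewrite intrB.
by exists m%:Z.
Qed.

Lemma transfer_comb c t w w1 w2 : (forall p, w p = t * w1 p + (1 - t) * w2 p) ->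
  transfer c w = [ffun i => t * transfer c w1 i + (1 - t) * transfer c w2 i].
Proof.
move=> wE; apply/ffunP => i; rewrite !ffunE !wE.
by case: ifP => _; rewrite ?wE; ring.
Qed.

Lemma order_lift_shift_gap c w k s : order_lift c w ->
  (forall q, in_gap k (w q) -> k%:R <= w q + s <= k.+1%:R) ->
  order_lift c (fun p => shift_gap k s (w p)).
Proof.
case=> wA w0 wmono wc ws.
have shift_le v v' : v <= v' -> (in_gap k v -> k%:R <= v + s <= k.+1%:R) ->
    (exists q, v' = w q) -> shift_gap k s v <= shift_gap k s v'.
  by move=> vv' vs [q v'E]; subst v'; apply: shift_gap_le vs (ws q) vv'.
split.
- by move=> a aA; rewrite wA // shift_gap_nat.
- move=> p; rewrite -(mulr0n 1) -(shift_gap_nat k s 0); apply: shift_le.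
  + exact: w0.
  + by rewrite (negbTE (in_gap_nat R k 0)).
  + by exists p.
- by move=> p q pq pqA; apply: shift_le; [exact: wmono|exact: ws|exists q].
- move=> p pU2; case: (wc p pU2) => cp cAU2 cmax; split=> // q qp qAU2.
  by apply: shift_le; [exact: cmax|exact: ws|exists (c p)].
Qed.

Definition nonnat_points (w : P -> R) : {set P} :=
  [set p | ~~ is_nat_le mark_max (w p)].

Lemma card_nonnat_shift w k s q : in_gap k (w q) ->
  is_nat_le mark_max (shift_gap k s (w q)) ->
  (#|nonnat_points (fun p => shift_gap k s (w p))| < #|nonnat_points w|)%N.
Proof.
move=> qgap qnat; apply/proper_card/properP; split.
  apply/subsetP => p; rewrite !inE; apply: contra => pnat.
  by case/is_nat_leP: (pnat) => m wm; rewrite wm shift_gap_nat -wm.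
exists q; rewrite !inE ?qnat //; apply/negP => /is_nat_leP [m wm].
by move: qgap; rewrite wm (negbTE (in_gap_nat R k m)).
Qed.

Lemma order_lift_split c w p0 : order_lift c w -> ~~ is_nat_le mark_max (w p0) ->
  exists t w1 w2, [/\ 0 <= t <= 1, forall p, w p = t * w1 p + (1 - t) * w2 p,
    order_lift c w1 /\ (#|nonnat_points w1| < #|nonnat_points w|)%N &
    order_lift c w2 /\ (#|nonnat_points w2| < #|nonnat_points w|)%N].
Proof.
move=> Hw p0Nnat; case: (Hw) => _ w0 _ _.
have [k kmax p0gap] : exists2 k, (k < mark_max)%N & in_gap k (w p0).
  apply: exists_in_gap (w0 p0) (order_lift_le_max p0 Hw) _ => m mmax.
  by apply: contraNneq p0Nnat => ->; apply: is_nat_le_nat.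
have p0gap' : p0 \in [pred q | in_gap k (w q)] by [].
have [lo /= lo_gap lo_min] := arg_minP w p0gap'.
have [hi /= hi_gap hi_max] := arg_maxP w p0gap'.
have gap_bounds q : in_gap k (w q) ->
    [/\ k%:R < w q, w q < k.+1%:R, w lo <= w q & w q <= w hi].
  by move=> qgap; case/andP: (qgap) => ? ?; split=> //; [exact: lo_min|exact: hi_max].
have [lo1 lo2 _ _] := gap_bounds lo lo_gap.
have [hi1 hi2 _ _] := gap_bounds hi hi_gap.
pose s1 := k%:R - w lo; pose s2 := k.+1%:R - w hi.
have s1_lt0 : s1 < 0 by rewrite /s1; lra.
have s2_gt0 : 0 < s2 by rewrite /s2; lra.
exists (s2 / (s2 - s1)), (fun p => shift_gap k s1 (w p)), (fun p => shift_gap k s2 (w p)).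
split.
- by rewrite divr_ge0 ?ler_pdivrMr ?mul1r ?subr_gt0 ?(lt_trans s1_lt0) //=; lra.
- by move=> p; rewrite shift_gap_comb // lt_eqF // (lt_trans s1_lt0).
- split; first by apply: order_lift_shift_gap => // q /gap_bounds [? ? ? ?];
    apply/andP; split; rewrite /s1; lra.
  apply: (card_nonnat_shift lo_gap).
  by rewrite /shift_gap lo_gap /s1 addrC subrK is_nat_le_nat // ltnW.
- split; first by apply: order_lift_shift_gap => // q /gap_bounds [? ? ? ?];
    apply/andP; split; rewrite /s2; lra.
  apply: (card_nonnat_shift hi_gap).
  by rewrite /shift_gap hi_gap /s2 addrC subrK is_nat_le_nat.
Qed.

Lemma transfer_conv_lattice c w : order_lift c w ->
  conv_closure (fun z => CO z /\ lattice_point z) (transfer c w).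
Proof.
have nat_case w' : order_lift c w' -> (forall p, is_nat_le mark_max (w' p)) ->
    conv_closure (fun z => CO z /\ lattice_point z) (transfer c w').
  move=> Hw' w'nat; apply: conv_closure_base; split; first exact: transfer_CO.
  by apply: transfer_lattice => p; apply: is_nat_leP.
move: {2}#|_| (leqnn #|nonnat_points w|) => n; elim: n w => [|n IH] w wn Hw.
  apply: nat_case => // p; apply: contraT => pN.
  by move: wn; rewrite leqn0 cards_eq0 => /eqP /setP /(_ p); rewrite !inE pN.
case: (boolP [exists p, ~~ is_nat_le mark_max (w p)]); last first.
  by move/existsPn => wnat; apply: nat_case => // p; move: (wnat p); rewrite negbK.
case/existsP => p0 /(order_lift_split Hw).
move=> [t [w1 [w2 [/andP [t0 t1] wE [w1_lift w1_fewer] [w2_lift w2_fewer]]]]].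
rewrite (transfer_comb c wE); apply: conv_closure_comb; rewrite //;
  by apply: IH; rewrite // -ltnS (leq_trans _ wn).
Qed.

Section Convexity.
Variables (n : nat) (c : 'I_n -> R) (v : 'I_n -> {ffun I -> R}).
Hypotheses (c0 : forall k, 0 <= c k) (c1 : \sum_k c k = 1) (vCO : forall k, CO (v k)).

Let y := \sum_k [ffun i => c k * v k i].
Let affine (F : {ffun I -> R} -> R) := F y = \sum_k c k * F (v k).

Lemma affine_xc p : affine (fun z => xc z p).
Proof.
rewrite /affine /xc; case: insub => [i|]; last by rewrite big1 // => k _; rewrite mulr0.
by rewrite /y sum_ffunE; apply: eq_bigr => k _; rewrite ffunE.
Qed.

Lemma affine_const (u : R) : affine (fun _ => u).
Proof. by rewrite /affine -mulr_suml c1 mul1r. Qed.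

Lemma affineB F G : affine F -> affine G -> affine (fun z => F z - G z).
Proof.
by rewrite /affine => -> ->; rewrite -sumrB; apply: eq_bigr => k _; rewrite mulrBr.
Qed.

Lemma affine_path_sum (s : seq P) : affine (fun z => \sum_(p <- s) xc z p).
Proof.
rewrite /affine; under [RHS]eq_bigr do rewrite mulr_sumr.
by rewrite exchange_big /=; apply: eq_bigr => p _; apply: affine_xc.
Qed.

Lemma affine_lamx a : affine (fun z => lamx lambda z a).
Proof. by rewrite /lamx; case: (a \in A); [exact: affine_const|exact: affine_xc]. Qed.

Lemma affine_le F G : affine F -> affine G ->
  (forall k, F (v k) <= G (v k)) -> F y <= G y.
Proof. by move=> -> -> FG; apply: ler_sum => k _; apply: ler_wpM2l. Qed.

Lemma CO_convex : CO y.
Proof.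
split; [|split; [|split; [|split; [|split]]]].
- move=> p a pU1 aA pa; apply: (affine_le (affine_xc p) (affine_const _)) => k.
  exact: CO_U1_le_mark.
- move=> q b qU1 bA bq; apply: (affine_le (affine_const _) (affine_xc q)) => k.
  exact: CO_mark_le_U1.
- move=> p q pU1 qU1 pq; apply: (affine_le (affine_xc p) (affine_xc q)) => k.
  exact: CO_U1_mono.
- move=> p pU2; apply: (affine_le (affine_const 0) (affine_xc p)) => k.
  exact: CO_U2_ge0.
- move=> a b s aAU1 bAU1 s0 sU2 bs lasta.
  apply: (affine_le (affine_path_sum s) (affineB (affine_lamx a) (affine_lamx b))) => k.
  exact: CO_chain.
- move=> q p s qU1 psU2 ps lastq.
  apply: (affine_le (affine_path_sum (p :: s)) (affine_xc q)) => k.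
  exact: CO_chain_U1.
Qed.

End Convexity.

Lemma lift_scaled_nat n x : CO x -> lattice_point [ffun i => n%:R * x i] ->
  forall p, exists m : nat, n%:R * lift x p = m%:R.
Proof.
move=> Hx nx_lat p.
have nx_nat r : r \notin A -> exists m : nat, n%:R * xc x r = m%:R.
  move=> rA; case: (nx_lat (Sub r rA)) => z; rewrite ffunE -xc_Sub => zE.
  by rewrite zE; apply: intr_ge0_nat; rewrite -zE mulr_ge0 ?CO_ge0.
have [k [S [SA ->]]] := lift_affine Hx p.
have [m mE] : exists m : nat, n%:R * \sum_(s in S) xc x s = m%:R.
  rewrite mulr_sumr; apply: (big_rec (fun u => exists m : nat, u = m%:R)).
    by exists 0%N.
  move=> s u sS [m' ->]; have /nx_nat [m'' ->] : s \notin A.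
    by move: (subsetP SA s sS); rewrite inE.
  by exists (m'' + m')%N; rewrite natrD.
by exists (n * k + m)%N; rewrite mulrDr mE natrD natrM.
Qed.

Lemma order_lift_floor c w n (m : P -> nat) (k : 'I_n) :
  order_lift c w -> (forall p, n%:R * w p = (m p)%:R) ->
  order_lift c (fun p => ((m p + k) %/ n)%N%:R).
Proof.
move=> [wA w0 wmono wc] mE; have n0 : (0 < n)%N := leq_ltn_trans (leq0n k) (ltn_ord k).
have floor_le p q : w p <= w q -> ((m p + k) %/ n)%N%:R <= ((m q + k) %/ n)%N%:R :> R.
  move=> pq; rewrite ler_nat leq_div2r // leq_add2r -(ler_nat R) -!mE.
  by rewrite ler_wpM2l.
split.
- move=> a aA; have -> : m a = (lambda a * n)%N.
    by apply/eqP; rewrite -(eqr_nat R) -mE wA // natrM mulrC.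
  by rewrite divnMDl // divn_small ?addn0.
- by move=> p; rewrite ler0n.
- by move=> p q pq pqA; apply: floor_le; apply: wmono.
- move=> p pU2; case: (wc p pU2) => cp cAU2 cmax; split=> // q qp qAU2.
  by apply: floor_le; apply: cmax.
Qed.

Lemma CO_integral_decomposition n x : (0 < n)%N -> CO x ->
  lattice_point [ffun i => n%:R * x i] ->
  exists xs : 'I_n -> {ffun I -> R},
    (forall k, lattice_point (xs k) /\ CO (xs k)) /\
    [ffun i => n%:R * x i] = \sum_k xs k.
Proof.
move=> n0 Hx nx_lat.
have m_ex p : exists m : nat, n%:R * lift x p == m%:R.
  by have [m ->] := lift_scaled_nat Hx nx_lat p; exists m.
pose m p := xchoose (m_ex p).
have mE p : n%:R * lift x p = (m p)%:R by apply/eqP; exact: (xchooseP (m_ex p)).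
pose w (k : 'I_n) p : R := ((m p + k) %/ n)%N%:R.
have sum_w p : \sum_k w k p = n%:R * lift x p.
  by rewrite -natr_sum sum_divn_add // mE.
exists (fun k => transfer (lift_pred x) (w k)); split.
  move=> k; split; first by apply: transfer_lattice => p; eexists.
  exact: transfer_CO (order_lift_floor k (lift_order_lift Hx) mE).
apply/ffunP => i; rewrite sum_ffunE ffunE -{1}(transferK Hx) ffunE.
under eq_bigr do rewrite ffunE.
by case: ifP => _; rewrite ?sumrB !sum_w ?mulrBr.
Qed.

Lemma CO_bounds z i : CO z -> 0 <= z i <= mark_max%:R.
Proof.
move=> Hz; have Hw := lift_order_lift Hz; rewrite -(transferK Hz) ffunE.
case: (Hw) => _ w0 wmono wc; have le_max p := order_lift_le_max p Hw.
case: ifP => iU2; last by rewrite w0 le_max.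
case: (wc _ iU2) => cp _ _; rewrite subr_ge0 wmono ?(U2_notA iU2) ?orbT //=.
by have := le_max (val i); have := w0 (lift_pred z (val i)); lra.
Qed.

Lemma CO_lattice_points_finite : exists S : seq {ffun I -> R},
  forall z, z \in S <-> CO z /\ lattice_point z.
Proof.
pose box := [seq [ffun i => (f i : nat)%:R : R]
  | f : {ffun I -> 'I_mark_max.+1} <- enum {ffun I -> 'I_mark_max.+1}].
have [S SE] := exists_filter_prop (fun z => CO z) box.
exists S => z; rewrite SE; split=> [[/mapP [f _ ->] Hz]|[Hz z_lat]].
  by split=> // i; exists (f i : nat)%:Z; rewrite ffunE.
split=> //.
have box_i i : exists k : 'I_mark_max.+1, z i == (k : nat)%:R.
  case/andP: (CO_bounds i Hz) => z0 zmax; case: (z_lat i) => zi zE.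
  have [m mE] : exists m : nat, z i = m%:R.
    by rewrite zE; apply: intr_ge0_nat; rewrite -zE.
  have mmax : (m <= mark_max)%N by rewrite -(ler_nat R) -mE.
  by exists (Ordinal (n := mark_max.+1) mmax); rewrite mE.
apply/mapP; exists [ffun i => xchoose (box_i i)]; first by rewrite mem_enum.
by apply/ffunP => i; rewrite !ffunE; apply/eqP; exact: (xchooseP (box_i i)).
Qed.

Lemma lattice_polytope_CO : lattice_polytope CO.
Proof.
have [S SE] := CO_lattice_points_finite.
exists S; split=> [z /SE [] //|y]; split.
  move=> Hy; apply: (conv_closure_hull (T := fun z => CO z /\ lattice_point z)).
    by move=> z /SE.
  by rewrite -(transferK Hy); apply/transfer_conv_lattice/lift_order_lift.
by case=> c [c0 c1 ->]; apply: CO_convex => // k; case/SE: (mem_nth 0 (ltn_ord k)).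
Qed.

Lemma normal_polytope_CO : normal_polytope CO.
Proof.
move=> n n0 y; split=> [[y_lat [x [Hx yE]]]|[xs [Hxs ->]]].
  by subst y; apply: CO_integral_decomposition.
split; first by apply: lattice_point_sum => k; case: (Hxs k).
have n0R : n%:R != 0 :> R by rewrite pnatr_eq0 -lt0n.
exists (\sum_k [ffun i => n%:R^-1 * xs k i]); split.
  apply: CO_convex => [k||k]; first by rewrite invr_ge0 ler0n.
    by rewrite sumr_const card_ord -(mulr_natr (n%:R^-1)) mulVf.
  by case: (Hxs k).
apply/ffunP => i; rewrite !ffunE !sum_ffunE mulr_sumr; apply: eq_bigr => k _.
by rewrite ffunE mulrA mulfV // mul1r.
Qed.

End MarkedChainOrderPolytope.

Theorem corollary2p2 (R : realFieldType) (d : Order.disp_t) (P : finPOrderType d)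
    (A U1 U2 : {set P}) (lambda : P -> nat)
    (HA : marked_set A) (Hdec : decomposition A U1 U2) (Hadm : admissible U1 U2) :
  lattice_polytope (@chain_order_polytope d P A U1 U2 lambda R) /\
  normal_polytope (@chain_order_polytope d P A U1 U2 lambda R).
Proof.
split; [exact: lattice_polytope_CO|exact: normal_polytope_CO].
Qed.
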